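(* Let $g,h\in G(\Gamma)$ with $|h|_r=m$ and $|g|_r=n$. Then there exist integers $0\le q\le\min(m,n)$ and $0\le p\le\kappa$ and reduced words $g\equiv g_1\cdots g_n$, $h\equiv h_1\cdots h_m$ (with $g_i\in G_{v_i}$, $h_i\in G_{w_i}$) such that: $g_i=h_i$ for $1\le i\le q$; for $q<i\le q+p$ the syllables $g_i$ and $h_i$ lie in the same vertex group $G_{v_i}$ and $h_i\neq g_i$; the word $$h_m^{-1}\cdots h_{q+p+1}^{-1}\,(h_{q+1}^{-1}g_{q+1})\cdots(h_{q+p}^{-1}g_{q+p})\,g_{q+p+1}\cdots g_n$$ is a reduced word representing $h^{-1}g$ (each parenthesized product being a single syllable); and for all $1\le i,j\le p$ the vertex $v_{q+j}$ lies in $\mathrm{st}(v_{q+i})$, i.e. $g_{q+j},h_{q+j}\in G(\mathrm{st}(v_{q+i}))$.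
   Context: $\Gamma$ is a finite simplicial graph, $\{G_v\}_{v\in\Gamma}$ are groups, and $G(\Gamma)$ is their graph product: the quotient of $\ast_vG_v$ by the normal subgroup generated by $[G_v,G_w]$ for all edges $[vw]$ of $\Gamma$. Vertices joined by an edge are adjacent; $\mathrm{lk}(v)$ is the set of vertices adjacent to $v$, $\mathrm{st}(v)=\mathrm{lk}(v)\cup\{v\}$, and $G(\mathrm{lk}(v))$, $G(\mathrm{st}(v))$ denote the subgroups generated by the $G_w$ with $w$ in these sets. $\kappa$ is the maximal number of pairwise adjacent vertices of $\Gamma$. A word is a finite sequence $(g_1,\dots,g_n)$ with $g_i\in G_{v_i}$ (its syllables); it represents $g_1\cdots g_n$. Allowed moves: swapping two consecutive syllables from adjacent vertex groups (shuffle), multiplying two consecutive syllables from the same vertex group into one, deleting an identity syllable. A word is reduced if no sequence of moves shortens it. Every element has a reduced word and any two reduced words for the same element differ by shuffles; we write $g\equiv g_1\cdots g_n$ for a reduced word of $g$ and $|g|_r=n$ for the reduced word length. *)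

From HB Require Import structures.
From mathcomp Require Import all_boot all_order.
From Stdlib Require Import Relations.Relation_Operators.
From Stdlib Require List.
Set Implicit Arguments. Unset Strict Implicit. Unset Printing Implicit Defensive.

Record grp := Grp {
  gcarrier :> Type;
  gmul : gcarrier -> gcarrier -> gcarrier;
  gone : gcarrier;
  ginv : gcarrier -> gcarrier;
  gmulA : forall x y z, gmul x (gmul y z) = gmul (gmul x y) z;
  gmul1 : forall x, gmul gone x = x;
  gmulV : forall x, gmul (ginv x) x = gone
}.

Section GraphProduct.
Variables (V : finType) (adj : rel V) (G : V -> grp).

Definition syllable := {v : V & G v}.
Definition word := seq syllable.

Definition syl_inv (x : syllable) : syllable := existT _ (tag x) (ginv (tagged x)).
Definition winv (w : word) : word := rev (map syl_inv w).

Inductive move : word -> word -> Prop :=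
| move_shuffle (s t : word) (x y : syllable) :
    adj (tag x) (tag y) -> move (s ++ [:: x; y] ++ t) (s ++ [:: y; x] ++ t)
| move_merge (s t : word) (v : V) (a b : G v) :
    move (s ++ [:: existT _ v a; existT _ v b] ++ t) (s ++ [:: existT _ v (gmul a b)] ++ t)
| move_delete (s t : word) (v : V) :
    move (s ++ [:: existT _ v (gone (G v))] ++ t) (s ++ t).

(* Two words represent the same element of G(Gamma): equivalence closure of
   the moves (this is exactly equality in the graph product presentation). *)
Definition weq : word -> word -> Prop := clos_refl_sym_trans word move.

Definition reduced (w : word) : Prop :=
  forall w', clos_refl_trans word move w w' -> size w <= size w'.

Definition rlen (w : word) (n : nat) : Prop :=
  exists w', weq w w' /\ reduced w' /\ size w' = n.

Definition in_star (v u : V) : bool := (u == v) || adj v u.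

Definition clique (S : {set V}) : bool :=
  [forall x in S, forall y in S, (x != y) ==> adj x y].

Definition kappa : nat := \max_(S : {set V} | clique S) #|S|.

Definition spair := {v : V & (G v * G v)%type}.
Definition pfst (x : spair) : syllable := existT _ (tag x) (tagged x).1.
Definition psnd (x : spair) : syllable := existT _ (tag x) (tagged x).2.
Definition pquot (x : spair) : syllable :=
  existT _ (tag x) (gmul (ginv (tagged x).2) (tagged x).1).

End GraphProduct.

(* A word is reduced iff it has no trivial syllable and no vertex occurs twice
   in it with only neighbours of that vertex in between ([normal]): such words
   admit shuffles only, while any other word can be shortened by shuffling two
   syllables of one vertex group together and merging them.  Starting from
   reduced words for g and h, repeatedly pull to the front of both a vertex u
   that can lead what remains of each word and is adjacent to every vertex
   paired so far: equal syllables extend the common prefix, distinct ones are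
   paired.  The paired vertices are pairwise adjacent, hence at most kappa.
   Once no such u is left, cancelling the common prefix of h^-1 g and merging
   the paired syllables leaves a normal, hence reduced, word. *)

From HB Require Import structures.
From mathcomp Require Import all_boot all_order.
From Stdlib Require Import Relations.Relation_Operators.
From Stdlib Require Import Relations.Operators_Properties Classical.
From Stdlib Require List.

#[local] Arguments rt_step {A R x y}.
#[local] Arguments rt_refl {A R x}.
#[local] Arguments rt_trans {A R x y z}.
#[local] Arguments rst_trans {A R x y z}.
#[local] Arguments clos_rt_clos_rst {A R x y}.

Section GroupFacts.
Context {K : grp}.
Implicit Types a b : K.

Lemma gmulgV a : gmul a (ginv a) = gone K.
Proof.
rewrite -[gmul a (ginv a)]gmul1 -[in gmul (gone K) _](gmulV (ginv a)).
by rewrite -gmulA [gmul (ginv a) (gmul a _)]gmulA gmulV gmul1 gmulV.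
Qed.

Lemma gmulg1 a : gmul a (gone K) = a.
Proof. by rewrite -(gmulV a) gmulA gmulgV gmul1. Qed.

Lemma gquot_eq1 a b : gmul (ginv b) a = gone K -> a = b.
Proof. by move=> E; rewrite -(gmul1 a) -(gmulgV b) -gmulA E gmulg1. Qed.

Lemma ginv_eq1 a : ginv a = gone K -> a = gone K.
Proof. by move=> E; symmetry; apply: gquot_eq1; rewrite gmulg1. Qed.

End GroupFacts.

Section MergeFree.
Context {V : eqType} (adj : rel V).

(* Some occurrence of v in s is preceded only by neighbours of v, so it can be
   shuffled to the front. *)
Fixpoint leading (v : V) (s : seq V) : bool :=
  if s is y :: t then (y == v) || adj v y && leading v t else false.

Fixpoint merge_free (s : seq V) : bool :=
  if s is x :: t then ~~ leading x t && merge_free t else true.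

Fixpoint cross_free (u w : seq V) : bool :=
  if u is x :: t then ~~ (all (adj x) t && leading x w) && cross_free t w
  else true.

Lemma leading_cat v u w :
  leading v (u ++ w) = leading v u || all (adj v) u && leading v w.
Proof.
elim: u => [|y u IH] //=; rewrite IH.
by case: (y == v); case: (adj v y); case: (leading v u); case: (all _ u).
Qed.

Lemma leading_shuffle {v B} C : all (adj v) B -> leading v (B ++ v :: C).
Proof.
elim: B => [|y B IH] /=; first by rewrite eqxx.
by case/andP=> -> /IH ->; rewrite orbT.
Qed.

Lemma leading_map_split {T : Type} {f : T -> V} {v w} :
  leading v (map f w) ->
  exists B y C, [/\ w = B ++ y :: C, f y = v & all (adj v) (map f B)].
Proof.
elim: w => [|x w IH] //=; case: eqP => [<- _|_ /= /andP [vx /IH]].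
  by exists [::], x, w.
by move=> [B [y [C [-> fy HB]]]]; exists (x :: B), y, C; rewrite /= vx HB.
Qed.

Lemma merge_free_cat u w :
  merge_free (u ++ w) = [&& merge_free u, merge_free w & cross_free u w].
Proof.
elim: u => [|x u IH] /=; first by rewrite andbT.
rewrite IH leading_cat negb_or.
by case: (leading x u); case: (all _ u && _); case: (merge_free u);
  case: (merge_free w); case: (cross_free u w).
Qed.

Lemma merge_free_catr {u w} : merge_free (u ++ w) -> merge_free w.
Proof. by rewrite merge_free_cat => /and3P []. Qed.

Lemma merge_free_repeat {A x B C} :
  merge_free (A ++ x :: B ++ x :: C) -> ~~ all (adj x) B.
Proof.
rewrite merge_free_cat => /and3P [_ /= /andP [nlead _] _].
by apply: contra nlead => /(leading_shuffle C).
Qed.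

Lemma merge_free_map_split {T : Type} {f : T -> V} {w} :
  ~~ merge_free (map f w) ->
  exists A a B b C,
    [/\ w = A ++ a :: B ++ b :: C, f a = f b & all (adj (f a)) (map f B)].
Proof.
elim: w => [|x w IH] //=; rewrite negb_and negbK.
case/orP=> [/leading_map_split [B [y [C [-> fy HB]]]]|/IH].
  by exists [::], x, B, y, C.
by move=> [A [a [B [b [C [-> fab HB]]]]]]; exists (x :: A), a, B, b, C.
Qed.

Lemma merge_free_rev s : merge_free s -> merge_free (rev s).
Proof.
move=> free; apply: contraT; rewrite -[rev s]map_id.
move=> /merge_free_map_split [A [a [B [b [C [E /= ab HB]]]]]].
subst b; rewrite map_id in HB.
have Es : s = rev C ++ a :: rev B ++ a :: rev A.
  by rewrite -[s]revK E !(rev_cat, rev_cons) -!cats1 -!catA.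
by move: free HB; rewrite Es => /merge_free_repeat; rewrite all_rev => /negPf ->.
Qed.

Lemma cross_free_intro u w :
  (forall A x B, u = A ++ x :: B -> all (adj x) B -> ~~ leading x w) ->
  cross_free u w.
Proof.
elim: u => [|x u IH] H //=; apply/andP; split.
  by apply/negP=> /andP [xu xw]; move: (H [::] x u erefl xu); rewrite xw.
by apply: IH => A y B E; apply: (H (x :: A)); rewrite E.
Qed.

Lemma merge_free_splice M Gt Ht :
  merge_free (M ++ Gt) -> merge_free (M ++ Ht) -> pairwise adj M ->
  (forall u, leading u Gt -> leading u Ht -> ~~ all (adj u) M) ->
  merge_free (rev Ht ++ M ++ Gt).
Proof.
move=> freeG freeH pwM sat.
rewrite merge_free_cat merge_free_rev ?(merge_free_catr freeH) // freeG /=.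
apply: cross_free_intro => A x B E adjB.
have EH : Ht = rev B ++ x :: rev A.
  by rewrite -[Ht]revK E rev_cat rev_cons cat_rcons.
rewrite leading_cat negb_or; apply/andP; split.
  rewrite -[M]map_id; apply/negP.
  move=> /leading_map_split [M1 [y [M2 [EM /= Ey _]]]]; subst y.
  have EMH : M ++ Ht = M1 ++ x :: (M2 ++ rev B) ++ x :: rev A.
    by rewrite EM EH -!catA.
  move: freeH; rewrite EMH => /merge_free_repeat.
  rewrite all_cat all_rev adjB andbT.
  by move: pwM; rewrite EM pairwise_cat /= => /and3P [_ _ /andP [->]].
apply/negP=> /andP [adjM leadG].
have leadH : leading x Ht by rewrite EH leading_shuffle // all_rev.
by move: (sat x leadG leadH); rewrite adjM.
Qed.

Hypotheses (adj_sym : symmetric adj) (adj_irr : irreflexive adj).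

Lemma leading_swap a b c t :
  adj a b -> leading c [:: a, b & t] = leading c [:: b, a & t].
Proof.
move=> ab /=.
case: (a =P c) => [<-|na]; case: (b =P c) => [eb|nb] //=.
- by rewrite ab orbT.
- by rewrite ab orbT.
- by subst b; rewrite adj_sym ab.
- by case: (adj c a); case: (adj c b).
Qed.

Lemma cross_free_eq u w w' :
  (forall v, leading v w = leading v w') -> cross_free u w = cross_free u w'.
Proof. by move=> E; elim: u => [|x u IH] //=; rewrite IH E. Qed.

Lemma merge_free_swap s a b t :
  adj a b -> merge_free (s ++ [:: a, b & t]) -> merge_free (s ++ [:: b, a & t]).
Proof.
move=> ab; rewrite !merge_free_cat (@cross_free_eq s _ [:: b, a & t]);
  last by move=> v; apply: leading_swap.
case/and3P=> -> + -> /=; rewrite andbT.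
have nab : (a == b) = false by apply/eqP=> E; subst b; rewrite adj_irr in ab.
by rewrite /= [b == a]eq_sym nab [adj b a]adj_sym ab; case/and3P=> -> -> ->.
Qed.

End MergeFree.

Lemma map_f_In {T : Type} {U : eqType} (f : T -> U) {s : seq T} {x} :
  List.In x s -> f x \in map f s.
Proof. by elim: s => [|y s IH] //= [<-|/IH fx]; rewrite inE ?eqxx ?fx ?orbT. Qed.

Section Words.
Context {V : finType} (adj : rel V) {G : V -> grp}.
Hypotheses (adj_sym : symmetric adj) (adj_irr : irreflexive adj).

Local Notation moves := (clos_refl_trans (word G) (@move V adj G)).
Local Notation pfst := (@pfst V G).
Local Notation psnd := (@psnd V G).
Local Notation pquot := (@pquot V G).
Implicit Types (w : word G) (mid : seq (spair G)).

Lemma move_ctx p s {w w'} :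
  move adj w w' -> move adj (p ++ w ++ s) (p ++ w' ++ s).
Proof.
case=> [l r x y xy|l r v a b|l r v];
  [have := move_shuffle (p ++ l) (r ++ s) xy
  |have := move_merge adj (p ++ l) (r ++ s) a b
  |have := move_delete adj (p ++ l) (r ++ s) v]; by rewrite -!catA.
Qed.

Lemma moves_ctx p s {w w'} : moves w w' -> moves (p ++ w ++ s) (p ++ w' ++ s).
Proof.
elim=> [x y /(move_ctx p s)|x|x y z _ IH1 _ IH2];
  [exact: rt_step|exact: rt_refl|exact: rt_trans IH2].
Qed.

Lemma moves_catl p {w w'} : moves w w' -> moves (p ++ w) (p ++ w').
Proof. by move/(moves_ctx p [::]); rewrite !cats0. Qed.

Lemma moves_shuffle S y T :
  all (adj (tag y)) (map tag S) -> moves (S ++ y :: T) (y :: S ++ T).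
Proof.
elim: S => [|z S IH] /=; first by move=> _; apply: rt_refl.
case/andP=> yz /IH /(moves_catl [:: z]) /= IHz.
apply: rt_trans IHz (rt_step _).
have zy : adj (tag z) (tag y) by rewrite adj_sym.
exact: (move_shuffle [::] (S ++ T) zy).
Qed.

Fixpoint nontrivial w : Prop :=
  if w is x :: t then tagged x <> gone (G (tag x)) /\ nontrivial t else True.

Lemma nontrivial_cat u w : nontrivial (u ++ w) <-> nontrivial u /\ nontrivial w.
Proof. by elim: u => [|x u IH] /=; tauto. Qed.

Lemma winv_cons x w : winv (x :: w) = winv w ++ [:: syl_inv x].
Proof. by rewrite /winv /= rev_cons cats1. Qed.

Lemma winv_cat u w : winv (u ++ w) = winv w ++ winv u.
Proof. by rewrite /winv map_cat rev_cat. Qed.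

Lemma map_tag_winv w : map tag (winv w) = rev (map tag w).
Proof. by rewrite /winv map_rev -map_comp. Qed.

Lemma map_tag_pfst mid : map tag (map pfst mid) = map tag mid.
Proof. by rewrite -map_comp. Qed.

Lemma map_tag_psnd mid : map tag (map psnd mid) = map tag mid.
Proof. by rewrite -map_comp. Qed.

Lemma map_tag_pquot mid : map tag (map pquot mid) = map tag mid.
Proof. by rewrite -map_comp. Qed.

Lemma nontrivial_winv {w} : nontrivial w -> nontrivial (winv w).
Proof.
elim: w => [|[v a] w IH] //= [a1 /IH ntr]; rewrite winv_cons.
by apply/nontrivial_cat; split=> //=; split=> // /ginv_eq1.
Qed.

Lemma nontrivial_pquot {mid} :
  (forall x, List.In x mid -> (tagged x).2 <> (tagged x).1) ->
  nontrivial (map pquot mid).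
Proof.
elim: mid => [|[v [a b]] mid IH] //= ne; split.
  by move/gquot_eq1=> ab; apply: (ne (existT _ v (a, b))); [left|rewrite ab].
by apply: IH => x mx; apply: ne; right.
Qed.

Definition normal w := nontrivial w /\ merge_free adj (map tag w).

Lemma normal_move {w w'} :
  normal w -> move adj w w' -> normal w' /\ size w' = size w.
Proof.
move=> [ntr free] M; case: M ntr free => [s t x y xy|s t v a b|s t v] ntr free.
- split; last by rewrite !size_cat.
  split; last by move: free; rewrite !map_cat; apply: merge_free_swap.
  by move: ntr; rewrite !nontrivial_cat /=; tauto.
- by move: free; rewrite map_cat merge_free_cat /= eqxx /= andbF.
- by move/nontrivial_cat: ntr => [_ [] ].
Qed.

Lemma normal_moves {w w'} :
  moves w w' -> normal w -> normal w' /\ size w' = size w.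
Proof.
elim=> [x y M N|//|x y z _ IH1 _ IH2 N]; first exact: normal_move.
by have [/IH2 [N' ->] ->] := IH1 N.
Qed.

Lemma normal_reduced {w} : normal w -> reduced adj w.
Proof. by move=> N w' /normal_moves /(_ N) [_ ->]. Qed.

Lemma reduced_normal {w} : reduced adj w -> normal w.
Proof.
move=> red; split.
  elim: w red => [|[v a] w IH] red //=; split.
    move=> a1; subst a; have := red w (rt_step (move_delete adj [::] w v)).
    by rewrite /= ltnn.
  apply: IH => w' /(moves_catl [:: existT _ v a]) /red.
  by rewrite /= ltnS.
apply: contraT => /merge_free_map_split.
move=> [A [[v x] [B [[u y] [C [Ew /= vu adjB]]]]]]; subst w u.
have shuffled : moves (A ++ existT _ v x :: B ++ existT _ v y :: C)
                      (A ++ [:: existT _ v x; existT _ v y] ++ B ++ C).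
  have := moves_catl (A ++ [:: existT _ v x])
    (moves_shuffle B (existT _ v y) C adjB).
  by rewrite -!catA.
have := red _ (rt_trans shuffled (rt_step (move_merge adj A (B ++ C) x y))).
by rewrite !size_cat /= !size_cat /= leq_add2l addnS add1n ltnn.
Qed.

Lemma moves_cancel_winv w : moves (winv w ++ w) [::].
Proof.
elim: w => [|[v a] w IH] /=; first exact: rt_refl.
apply: rt_trans IH; rewrite winv_cons -catA.
have cancel : moves [:: syl_inv (existT _ v a); existT _ v a] [::].
  apply: rt_trans (rt_step (move_merge adj [::] [::] (ginv a) a)) _.
  by rewrite /= gmulV; apply: rt_step (move_delete adj [::] [::] v).
exact: (moves_ctx (winv w) w cancel : moves _ (winv w ++ w)).
Qed.

Lemma moves_merge_pairs {mid} :
  pairwise adj (map tag mid) ->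
  moves (winv (map psnd mid) ++ map pfst mid) (map pquot mid).
Proof.
elim: mid => [|[v [a b]] mid IH] /=; first by move=> _; apply: rt_refl.
case/andP=> adj_v /IH /(moves_catl [:: existT _ v (gmul (ginv b) a)]) IHv.
rewrite winv_cons -catA; apply: rt_trans IHv.
apply: rt_trans (moves_ctx (winv (map psnd mid)) (map pfst mid)
  (rt_step (move_merge adj [::] [::] (ginv b) a))) _.
by apply: moves_shuffle; rewrite map_tag_winv map_tag_psnd all_rev.
Qed.

Lemma moves_splice {pre mid gt ht} :
  pairwise adj (map tag mid) ->
  moves (winv (pre ++ map psnd mid ++ ht) ++ pre ++ map pfst mid ++ gt)
        (winv ht ++ map pquot mid ++ gt).
Proof.
move=> pw; rewrite !winv_cat -!catA.
have := moves_ctx (winv ht ++ winv (map psnd mid)) (map pfst mid ++ gt)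
  (moves_cancel_winv pre).
rewrite -!catA cat0s => /rt_trans; apply.
by have := moves_ctx (winv ht) gt (moves_merge_pairs pw); rewrite -!catA.
Qed.

Lemma normal_splice {pre mid gt ht} :
  normal (pre ++ map pfst mid ++ gt) -> normal (pre ++ map psnd mid ++ ht) ->
  pairwise adj (map tag mid) ->
  (forall x, List.In x mid -> (tagged x).2 <> (tagged x).1) ->
  (forall u, leading adj u (map tag gt) -> leading adj u (map tag ht) ->
     ~~ all (adj u) (map tag mid)) ->
  normal (winv ht ++ map pquot mid ++ gt).
Proof.
move=> [/nontrivial_cat [_ /nontrivial_cat [_ ntr_g]] free_g].
move=> [/nontrivial_cat [_ /nontrivial_cat [_ ntr_h]] free_h] pw ne sat.
split.
  apply/nontrivial_cat; split; first exact: nontrivial_winv.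
  by apply/nontrivial_cat; split; first exact: nontrivial_pquot.
move: free_g free_h; rewrite !map_cat map_tag_winv map_tag_pquot map_tag_pfst.
rewrite map_tag_psnd => /merge_free_catr free_g /merge_free_catr free_h.
exact: merge_free_splice.
Qed.

(* g0 and h0 are rewritten to pre ++ g_(q+1..q+p) ++ gt and
   pre ++ h_(q+1..q+p) ++ ht, the pairs (g_i, h_i) being stored in mid. *)
Definition aligned (g0 h0 pre : word G) mid (gt ht : word G) : Prop :=
  [/\ moves g0 (pre ++ map pfst mid ++ gt),
      moves h0 (pre ++ map psnd mid ++ ht),
      pairwise adj (map tag mid)
    & forall x, List.In x mid -> (tagged x).2 <> (tagged x).1].

Lemma aligned_init g0 h0 : aligned g0 h0 [::] [::] g0 h0.
Proof. by split=> //; apply: rt_refl. Qed.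

Lemma aligned_step {g0 h0 pre mid gt ht} u :
  aligned g0 h0 pre mid gt ht ->
  leading adj u (map tag gt) -> leading adj u (map tag ht) ->
  all (adj u) (map tag mid) ->
  exists pre' mid' gt' ht', aligned g0 h0 pre' mid' gt' ht' /\ size gt' < size gt.
Proof.
move=> [mv_g mv_h pw ne] /leading_map_split [B1 [[v a] [C1 [Eg /= <- adjB1]]]].
move=> /leading_map_split [B2 [[v' b] [C2 [Eh /= v'v adjB2]]]] adj_mid.
subst gt ht v'.
have shift_g : moves g0 (pre ++ existT _ v a :: map pfst mid ++ B1 ++ C1).
  apply: rt_trans mv_g (moves_catl pre _); rewrite !catA; apply: moves_shuffle.
  by rewrite map_cat map_tag_pfst all_cat adj_mid.
have shift_h : moves h0 (pre ++ existT _ v b :: map psnd mid ++ B2 ++ C2).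
  apply: rt_trans mv_h (moves_catl pre _); rewrite !catA; apply: moves_shuffle.
  by rewrite map_cat map_tag_psnd all_cat adj_mid.
have shrink : size (B1 ++ C1) < size (B1 ++ existT _ v a :: C1).
  by rewrite !size_cat /= addnS.
have [ab|nab] := classic (a = b).
  subst b; exists (rcons pre (existT _ v a)), mid, (B1 ++ C1), (B2 ++ C2).
  by split=> //; split; rewrite // -cats1 -catA.
exists pre, (existT _ v (a, b) :: mid), (B1 ++ C1), (B2 ++ C2); split=> //.
split=> //=; first by rewrite adj_mid.
by move=> x [<-|/ne] //= ba; apply: nab.
Qed.

Lemma aligned_saturate {g0 h0 pre mid gt ht} :
  aligned g0 h0 pre mid gt ht ->
  exists pre' mid' gt' ht', aligned g0 h0 pre' mid' gt' ht' /\
    forall u, leading adj u (map tag gt') -> leading adj u (map tag ht') ->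
      ~~ all (adj u) (map tag mid').
Proof.
have [k lt_k] := ubnP (size gt).
elim: k pre mid gt ht lt_k => [|k IH] pre mid gt ht; first by rewrite ltn0.
move=> lt_k al.
case: (boolP [exists u, [&& leading adj u (map tag gt),
  leading adj u (map tag ht) & all (adj u) (map tag mid)]]).
  move=> /existsP [u /and3P [lead_g lead_h adj_mid]].
  have [pre' [mid' [gt' [ht' [al' lt']]]]] :=
    aligned_step u al lead_g lead_h adj_mid.
  exact: IH (leq_trans lt' lt_k) al'.
move=> none; exists pre, mid, gt, ht; split=> // u lead_g lead_h.
apply/negP=> adj_mid.
by move/existsP: none; apply; exists u; rewrite lead_g lead_h adj_mid.
Qed.

End Words.

Lemma pairwise_in_star {V : finType} {adj : rel V} {s : seq V} :
  symmetric adj -> pairwise adj s -> {in s & s, forall x y, in_star adj x y}.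
Proof.
move=> adj_sym pw; apply/allrelP; rewrite -pairwise_all2rel.
- by apply: sub_pairwise pw => x y xy; rewrite /in_star xy orbT.
- by move=> x; rewrite /in_star eqxx.
- by move=> x y; rewrite /in_star eq_sym adj_sym.
Qed.

Lemma pairwise_size_le_kappa {V : finType} {adj : rel V} {s : seq V} :
  symmetric adj -> irreflexive adj -> pairwise adj s -> size s <= kappa adj.
Proof.
move=> adj_sym adj_irr pw.
rewrite -(card_uniqP (pairwise_uniq adj_irr pw)) -cardsE.
apply: leq_bigmax_cond; apply/forallP=> x; apply/implyP; rewrite inE => xs.
apply/forallP=> y; apply/implyP; rewrite inE => ys; apply/implyP=> nxy.
have := pairwise_in_star adj_sym pw x y xs ys.
by rewrite /in_star eq_sym (negPf nxy).
Qed.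

Theorem mainTheorem4 (V : finType) (adj : rel V)
  (adj_sym : symmetric adj) (adj_irr : irreflexive adj)
  (G : V -> grp) (g h : word G) (m n : nat) :
  rlen adj h m -> rlen adj g n ->
  exists (q p : nat) (pre : word G) (mid : seq (spair G)) (gt ht : word G),
    let gs := pre ++ map (@pfst V G) mid ++ gt in
    let hs := pre ++ map (@psnd V G) mid ++ ht in
    (q <= minn m n /\ p <= kappa adj /\ size pre = q /\ size mid = p) /\
    (size gs = n /\ size hs = m /\ reduced adj gs /\ reduced adj hs /\
     weq adj g gs /\ weq adj h hs) /\
    (forall x, List.In x mid -> (tagged x).2 <> (tagged x).1) /\
    (reduced adj (winv ht ++ map (@pquot V G) mid ++ gt) /\
     weq adj (winv hs ++ gs) (winv ht ++ map (@pquot V G) mid ++ gt)) /\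
    (forall x y, List.In x mid -> List.In y mid -> in_star adj (tag x) (tag y)).
Proof.
move=> [h0 [eq_h [/(reduced_normal adj adj_sym) nrm_h0 <-]]].
move=> [g0 [eq_g [/(reduced_normal adj adj_sym) nrm_g0 <-]]].
have [pre [mid [gt [ht [[mv_g mv_h pw ne] sat]]]]] :=
  aligned_saturate adj adj_sym (aligned_init adj g0 h0).
have [nrm_g <-] := normal_moves adj adj_sym adj_irr mv_g nrm_g0.
have [nrm_h <-] := normal_moves adj adj_sym adj_irr mv_h nrm_h0.
exists (size pre), (size mid), pre, mid, gt, ht => /=.
split.
  split; first by rewrite leq_min !size_cat !leq_addr.
  by rewrite -(size_map tag) pairwise_size_le_kappa.
have red := normal_reduced adj adj_sym adj_irr.
split; first by do !split; [exact: red nrm_g|exact: red nrm_h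
  |exact: rst_trans eq_g (clos_rt_clos_rst mv_g)
  |exact: rst_trans eq_h (clos_rt_clos_rst mv_h)].
split=> //; split; first split.
- exact: red (normal_splice adj nrm_g nrm_h pw ne sat).
- exact: clos_rt_clos_rst (moves_splice adj adj_sym pw).
- move=> x y /(map_f_In tag) xm /(map_f_In tag) ym.
  exact: pairwise_in_star adj_sym pw _ _ xm ym.
Qed.
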